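(* Let $T\in S(n,d)$ and let $\tau\subseteq[n]$ be a simplex on $\gamma_d$ with $\tau\le_{d+1}T$. Then $\tau$ is a face of $T$ if and only if there is no $\sigma\in\mathrm{sub}(T)$ with $\tau<_{d+1}\sigma$.
   Context: $\gamma_d=\{(t,t^2,\dots,t^d):t\in\mathbb{R}\}$. Fix $t_1<\dots<t_n$ and points $\gamma_d(t_i)$ identified with $i\in[n]$; $C(n,d)$ is their convex hull and $S(n,d)$ the set of triangulations of $C(n,d)$ with vertices in $[n]$. A simplex is a subset of size at most $d+1$, identified with its convex hull; simplices $\sigma,\tau$ overlap if $\mathrm{conv}(\sigma)\cap\mathrm{conv}(\tau)\supsetneq\mathrm{conv}(\sigma\cap\tau)$. The height function $h_\sigma:\mathrm{conv}(\sigma)\to\mathbb{R}$ gives the last coordinate of the point in the convex hull of the lifted points $\gamma_{d+1}(t_i)$, $i\in\sigma$, projecting to $p$. $\sigma<_{d+1}\tau$ means $\sigma,\tau$ overlap in $\mathbb{R}^d$ and $h_\sigma\le h_\tau$ on $\mathrm{conv}(\sigma)\cap\mathrm{conv}(\tau)$. For $T\in S(n,d)$, $h_T(p)=h_\rho(p)$ for $p\in\mathrm{conv}(\rho)$, $\rho\in T$; $\sigma\le_{d+1}T$ means $h_\sigma\le h_T$ on $\mathrm{conv}(\sigma)$. The submersion set is $\mathrm{sub}(T)=\{\sigma\subseteq[n]: \sigma\le_{d+1}T,\ \dim\sigma=\lceil d/2\rceil\}$ (i.e. $|\sigma|=\lceil d/2\rceil+1$). *)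

From HB Require Import structures.
From mathcomp Require Import all_boot all_order all_algebra.
From mathcomp Require Import reals.
Set Implicit Arguments. Unset Strict Implicit. Unset Printing Implicit Defensive.
Import Order.TTheory GRing.Theory Num.Theory.
Local Open Scope ring_scope.

Section Cyclic.
Variables (R : realType) (n d : nat) (t : 'I_n -> R).

Definition pt (i : 'I_n) : 'rV[R]_d := \row_(k < d) t i ^+ k.+1.

Definition convex_coef (S : {set 'I_n}) (lam : 'I_n -> R) : Prop :=
  (forall i, 0 <= lam i) /\ (forall i, i \notin S -> lam i = 0) /\
  \sum_i lam i = 1.

Definition in_conv (S : {set 'I_n}) (p : 'rV[R]_d) : Prop :=
  exists lam, convex_coef S lam /\ p = \sum_i lam i *: pt i.

(* hgt S p h : h = h_S(p), the last coordinate (t^(d+1)) of the point of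
   conv{gamma_{d+1}(t_i) : i in S} projecting to p. *)
Definition hgt (S : {set 'I_n}) (p : 'rV[R]_d) (h : R) : Prop :=
  exists lam, [/\ convex_coef S lam, p = \sum_i lam i *: pt i &
                  h = \sum_i lam i * t i ^+ d.+1].

(* sigma, tau overlap: conv sigma \cap conv tau strictly contains conv(sigma \cap tau)
   (the inclusion "contains" always holds). *)
Definition overlap (sigma tau : {set 'I_n}) : Prop :=
  exists p, [/\ in_conv sigma p, in_conv tau p & ~ in_conv (sigma :&: tau) p].

Definition hle_on (sigma tau : {set 'I_n}) : Prop :=
  forall p h1 h2, hgt sigma p h1 -> hgt tau p h2 -> h1 <= h2.

Definition lt_lift (sigma tau : {set 'I_n}) : Prop :=
  overlap sigma tau /\ hle_on sigma tau.

(* T in S(n,d): a set of d-simplices with vertices in [n] covering C(n,d)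
   and intersecting properly (no two overlap). *)
Definition triangulation (T : {set {set 'I_n}}) : Prop :=
  [/\ forall rho, rho \in T -> #|rho| = d.+1,
      forall p, in_conv setT p -> exists2 rho, rho \in T & in_conv rho p &
      forall rho rho', rho \in T -> rho' \in T -> ~ overlap rho rho'].

(* sigma <=_{d+1} T : h_sigma <= h_T on conv sigma, where h_T = h_rho on conv rho *)
Definition le_tri (sigma : {set 'I_n}) (T : {set {set 'I_n}}) : Prop :=
  forall rho, rho \in T -> hle_on sigma rho.

Definition in_sub (T : {set {set 'I_n}}) (sigma : {set 'I_n}) : Prop :=
  le_tri sigma T /\ #|sigma| = (uphalf d).+1.

Definition is_face (T : {set {set 'I_n}}) (tau : {set 'I_n}) : Prop :=
  exists2 rho, rho \in T & tau \subset rho.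

End Cyclic.

(* A point of conv(S) is encoded by convex coefficients lam on S: its position
   on the moment curve is given by the moments sum_i lam_i t_i^k, 1 <= k <= d,
   and its lifted height by the moment of order d+1.  Comparing two
   representations of one point thus amounts to a vector c whose moments of
   order 0..d vanish.  A rule of signs, proved with a polynomial having the sign
   of c at every node, shows that such a c <> 0 alternates in sign along d+2
   indices, ending with a negative entry when its moment of order d+1 is <= 0.
   The circuit supported on such a chain has the signs of c, a negative part of
   uphalf d + 1 points and a negative moment of order d+1.
   If tau is not a face, apply this to the barycenter of tau minus its
   representation in the simplex rho of T containing it: the negative part of
   the circuit is a simplex sigma of rho, hence below T, which overlaps tau and
   lies above it.  If tau is a face of rho and tau <_{d+1} sigma, the circuit
   obtained from the witness point splits into representations of one point by
   rho and by sigma, with sigma strictly higher, contradicting sigma <= T. *)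

From HB Require Import structures.
From mathcomp Require Import all_boot all_order all_algebra.
From mathcomp Require Import reals.
From mathcomp Require Import lra.
From Stdlib Require Import Classical.
Set Implicit Arguments. Unset Strict Implicit. Unset Printing Implicit Defensive.
Import Order.TTheory GRing.Theory Num.Theory.
Local Open Scope ring_scope.

Section RealFacts.
Variable R : realDomainType.

Lemma mul_lt0_neq0l (a b : R) : a * b < 0 -> a != 0.
Proof. by apply: contraTneq => ->; rewrite mul0r ltxx. Qed.

Lemma mul_lt0_neq0r (a b : R) : a * b < 0 -> b != 0.
Proof. by apply: contraTneq => ->; rewrite mulr0 ltxx. Qed.

Lemma mulrr_gt0 (x : R) : x != 0 -> 0 < x * x.
Proof. by move=> x0; rewrite -expr2 exprn_even_gt0. Qed.

Lemma psumr_gt0 (I : finType) (F : I -> R) i :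
  (forall j, 0 <= F j) -> 0 < F i -> 0 < \sum_j F j.
Proof. by move=> F_ge0 Fi; rewrite (bigD1 i) //= ltr_pwDl // sumr_ge0. Qed.

End RealFacts.

Section SignChanges.
Variables (R : realType) (n : nat) (t : 'I_n -> R).
Hypothesis t_incr : forall i j : 'I_n, (i < j)%N -> t i < t j.

Lemma t_le (i j : 'I_n) : (i <= j)%N -> t i <= t j.
Proof. by rewrite leq_eqVlt => /orP [/eqP/val_inj -> | /t_incr/ltW]. Qed.

Definition moment (c : 'I_n -> R) (k : nat) := \sum_i c i * t i ^+ k.

(* A path [x :: s] of [sign_change c] is an increasing chain of indices along
   which [c] alternates in sign; [size s] is its number of sign changes. *)
Definition sign_change (c : 'I_n -> R) : rel 'I_n :=
  fun a b => (a < b)%N && (c a * c b < 0).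

Definition sign_changes_le (c : 'I_n -> R) (m : nat) :=
  forall x s, path (sign_change c) x s -> (size s <= m)%N.

Lemma sign_change_opp c : sign_change (\- c) =2 sign_change c.
Proof. by move=> a b; rewrite /sign_change /= mulrNN. Qed.

Lemma momentN c k : moment (\- c) k = - moment c k.
Proof. by rewrite /moment -sumrN; apply: eq_bigr => i _; rewrite mulNr. Qed.

Lemma momentB c e k : moment (c \- e) k = moment c k - moment e k.
Proof. by rewrite /moment -sumrB; apply: eq_bigr => i _; rewrite mulrBl. Qed.

Lemma moment0 (c : 'I_n -> R) : moment c 0 = \sum_i c i.
Proof. by apply: eq_bigr => i _; rewrite expr0 mulr1. Qed.

Lemma alt_path_neq0 c x y s : path (sign_change c) x (y :: s) ->
  {in x :: y :: s, forall i, c i != 0}.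
Proof.
elim: s x y => [|z s IH] x y /= /andP [/andP [_ cxy] p] i.
  rewrite !inE => /orP [] /eqP ->; first exact: mul_lt0_neq0l cxy.
  exact: mul_lt0_neq0r cxy.
by rewrite inE => /orP [/eqP -> | /IH]; [apply: mul_lt0_neq0l cxy | apply].
Qed.

Lemma alt_path_last_neq0 c x s : path (sign_change c) x s -> s != [::] ->
  c (last x s) != 0.
Proof. by case: s => // y s p _; apply: (alt_path_neq0 p); rewrite mem_last. Qed.

Local Notation ltI := (fun a b : 'I_n => (a < b)%N).

Lemma alt_path_sorted c x s : path (sign_change c) x s -> sorted ltI (x :: s).
Proof. by apply: sub_path => a b /andP []. Qed.

Lemma ltI_trans : transitive ltI.
Proof. by move=> b a c; apply: ltn_trans. Qed.

Lemma ltI_irr : irreflexive ltI.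
Proof. by move=> a; rewrite ltnn. Qed.

Lemma alt_path_uniq c x s : path (sign_change c) x s -> uniq (x :: s).
Proof. by move/alt_path_sorted; apply: (sorted_uniq ltI_trans ltI_irr). Qed.

(* The last clause, the sign of [c l] at all nodes right of [t l], is the
   invariant that lets [exists_sign_poly] add one root per sign change. *)
Definition sign_poly m (c : 'I_n -> R) (l : 'I_n) (f : {poly R}) :=
  [/\ (size f <= m.+1)%N, 0 < c l * lead_coef f,
      forall i, 0 <= c i * f.[t i] &
      forall i : 'I_n, (l <= i)%N -> 0 < c l * f.[t i]].

Lemma sign_poly_const m c l : c l != 0 -> ~ (exists j, c j * c l < 0) ->
  sign_poly m c l (c l)%:P.
Proof.
move=> cl0 same; have cl2 := mulrr_gt0 cl0.
split=> [|||i _]; rewrite ?lead_coefC ?hornerC //.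
- by rewrite size_polyC; case: (_ != _).
- by move=> i; rewrite hornerC leNgt; apply/negP => ?; apply: same; exists i.
Qed.

Lemma opposite_lt_last (c : 'I_n -> R) (l i : 'I_n) :
  (forall j : 'I_n, (l < j)%N -> c j = 0) -> c i * c l < 0 -> (i < l)%N.
Proof.
move=> cr cil; rewrite ltn_neqAle; apply/andP; split.
  apply: contraTneq cil => /val_inj ->; rewrite -leNgt -expr2; exact: sqr_ge0.
by rewrite leqNgt; apply: contraTN cil => /cr ->; rewrite mul0r ltxx.
Qed.

Lemma last_opposite (c : 'I_n -> R) (l j0 : 'I_n) :
  (forall j : 'I_n, (l < j)%N -> c j = 0) -> c j0 * c l < 0 -> exists j : 'I_n,
  [/\ c j * c l < 0, (j < l)%N & forall i : 'I_n, (j < i)%N -> 0 <= c i * c l].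
Proof.
move=> cr Pj0.
have [j Pj jmax] := @arg_maxnP _ j0 (fun j => c j * c l < 0) val Pj0.
exists j; split; first exact: Pj.
  exact: opposite_lt_last Pj.
by move=> i ji; rewrite leNgt; apply: contraTN ji => /jmax; rewrite -leqNgt.
Qed.

Definition truncate (c : 'I_n -> R) (j i : 'I_n) : R :=
  if (i <= j)%N then c i else 0.

Lemma sign_change_truncate c (j : 'I_n) :
  subrel (sign_change (truncate c j)) (sign_change c).
Proof.
move=> a b /andP [ab]; rewrite /sign_change ab /truncate.
by case: (a <= j)%N; case: (b <= j)%N; rewrite ?mul0r ?mulr0 ?ltxx.
Qed.

Lemma truncate_neq0 c (j i : 'I_n) :
  truncate c j i != 0 -> (i <= j)%N /\ truncate c j i = c i.
Proof. by rewrite /truncate; case: (i <= j)%N; rewrite ?eqxx. Qed.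

Lemma sign_changes_truncate m c (j l : 'I_n) : (j < l)%N -> c j * c l < 0 ->
  sign_changes_le c m.+1 -> sign_changes_le (truncate c j) m.
Proof.
move=> jl Pj hp x [//|y s] pq.
have [Lj cL] := truncate_neq0 (alt_path_last_neq0 pq isT).
have pc := sub_path (@sign_change_truncate c j) pq.
set L := last x (y :: s) in Lj cL pc.
have cL0 : c L != 0 by rewrite -cL (alt_path_last_neq0 pq).
have [Ll|lL] := ltP (c L * c l) 0.
  have := hp x (rcons (y :: s) l).
  by rewrite rcons_path pc /sign_change Ll (leq_ltn_trans Lj jl) size_rcons; apply.
have LjN : c L * c j < 0 by have := mulrr_gt0 cL0; nra.
have Lj' : (L < j)%N.
  rewrite ltn_neqAle Lj andbT; apply: contraTneq LjN => /val_inj ->.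
  by rewrite -leNgt -expr2 sqr_ge0.
have := hp x (rcons (rcons (y :: s) j) l).
rewrite !rcons_path pc last_rcons /sign_change Lj' LjN jl Pj !size_rcons /= !ltnS.
by move=> /(_ isT) /ltnW.
Qed.

Lemma sign_poly_mul_sub m c (j l : 'I_n) g r : (j < l)%N -> c j * c l < 0 ->
  (forall i : 'I_n, (j < i)%N -> 0 <= c i * c l) ->
  t j < r -> (forall i : 'I_n, (j < i)%N -> r < t i) ->
  sign_poly m (truncate c j) j g -> sign_poly m.+1 c l (g * (r%:P - 'X)).
Proof.
move=> jl Pj jmax tjr rt [gs gl gpos gr].
rewrite /truncate leqnn in gl gr.
have hornerE i : (g * (r%:P - 'X)).[t i] = g.[t i] * (r - t i).
  by rewrite hornerM hornerD hornerN hornerC hornerX.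
have glt0 (i : 'I_n) : (j < i)%N -> c l * g.[t i] < 0.
  by move=> /ltnW /gr; nra.
split=> [|||i li].
- apply: leq_trans (size_polyMleq _ _) _.
  by rewrite -opprB size_polyN size_XsubC addn2.
- by rewrite lead_coefM -opprB lead_coefN lead_coefXsubC; nra.
- move=> i; rewrite hornerE; have [ij|ji] := leqP i j.
    have := gpos i; rewrite /truncate ij => gi.
    have : t i < r by apply: le_lt_trans (t_le ij) tjr.
    nra.
  have cig : c i * g.[t i] <= 0.
    have : (c l * c l) * (c i * g.[t i]) <= 0.
      by have := glt0 _ ji; have := jmax _ ji; nra.
    by rewrite pmulr_rle0 // mulrr_gt0 // (mul_lt0_neq0r Pj).
  by have := rt _ ji; nra.
- have ji := leq_trans jl li; rewrite hornerE.
  by have := glt0 _ ji; have := rt _ ji; nra.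
Qed.

Lemma exists_sign_poly m c (l : 'I_n) : c l != 0 ->
  (forall i : 'I_n, (l < i)%N -> c i = 0) -> sign_changes_le c m ->
  exists f, sign_poly m c l f.
Proof.
elim: m c l => [|m IH] c l cl0 cr hp.
all: have [[j0 Pj0]|same] := classic (exists j, c j * c l < 0);
  last by exists (c l)%:P; apply: sign_poly_const.
all: have [j [Pj jl jmax]] := last_opposite cr Pj0.
  by have := hp j [:: l]; rewrite /= /sign_change jl Pj => /(_ isT).
have cqj : truncate c j j != 0 by rewrite /truncate leqnn (mul_lt0_neq0l Pj).
have cqr (i : 'I_n) : (j < i)%N -> truncate c j i = 0.
  by move=> ji; rewrite /truncate leqNgt ji.
have [g g_sign] := IH _ _ cqj cqr (sign_changes_truncate jl Pj hp).
have j1n : (j.+1 < n)%N := leq_ltn_trans jl (ltn_ord l).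
have tj1 := t_incr (ltnSn j : (j < Ordinal j1n)%N).
exists (g * (((t j + t (Ordinal j1n)) / 2)%:P - 'X)).
apply: sign_poly_mul_sub g_sign => // [|i ji]; first lra.
by have := t_le (ji : (Ordinal j1n <= i)%N); lra.
Qed.

Lemma sum_horner_moment (c : 'I_n -> R) (f : {poly R}) N : (size f <= N)%N ->
  \sum_i c i * f.[t i] = \sum_(k < N) f`_k * moment c k.
Proof.
move=> hN; under eq_bigr => i _ do rewrite (horner_coef_wide _ hN) mulr_sumr.
rewrite exchange_big /=; apply: eq_bigr => k _.
by rewrite /moment mulr_sumr; apply: eq_bigr => i _; rewrite mulrCA mulrA.
Qed.

Lemma sign_poly_sum_gt0 m c l f : sign_poly m c l f -> 0 < \sum_i c i * f.[t i].
Proof. by case=> _ _ fpos fr; apply: (psumr_gt0 fpos (fr l (leqnn l))). Qed.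

Lemma last_neq0 (c : 'I_n -> R) : (exists i, c i != 0) ->
  exists l : 'I_n, c l != 0 /\ forall i : 'I_n, (l < i)%N -> c i = 0.
Proof.
move=> [i0 ci0]; have [l Pl lmax] := @arg_maxnP _ i0 (fun j => c j != 0) val ci0.
by exists l; split => // i; apply: contraTeq; rewrite -leqNgt => /lmax.
Qed.

Lemma moments_alt_path D c : (exists i, c i != 0) ->
  (forall k, (k <= D)%N -> moment c k = 0) ->
  exists x s, path (sign_change c) x s /\ size s = D.+1.
Proof.
move=> nz hm; have [[x [s [p hs]]]|few] :=
  classic (exists x s, path (sign_change c) x s /\ (D < size s)%N).
  by exists x, (take D.+1 s); rewrite take_path // size_takel.
have [l [cl0 cr]] := last_neq0 nz.
have [|f Hf] := @exists_sign_poly D c l cl0 cr.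
  by move=> x s p; rewrite leqNgt; apply/negP => hs; apply: few; exists x, s.
have := sign_poly_sum_gt0 Hf; case: Hf => fs _ _ _.
rewrite (sum_horner_moment c fs) big1 ?ltxx // => k _.
by rewrite hm ?mulr0 // -ltnS.
Qed.

Lemma alt_path_neg_end m c x s : path (sign_change c) x s -> (m < size s)%N ->
  exists y s', [/\ path (sign_change c) y s', size s' = m & c (last y s') < 0].
Proof.
move=> p hs; have := take_path m.+1 p; have := size_takel hs.
case/lastP: (take m.+1 s) => [//|q z] hq.
rewrite rcons_path size_rcons in hq * => /andP [pq hz].
case: (ltP (c z) 0) => cz.
  case: q pq hq hz => [|y q] /= pq [<-] hz; first by exists z, [::].
  exists y, (rcons q z); rewrite size_rcons last_rcons rcons_path hz.
  by case/andP: pq => _ ->.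
by case/andP: hz => _ hz; exists x, q; split => //; [case: hq | nra].
Qed.

Lemma moments_alt_path_neg D c : (exists i, c i != 0) ->
  (forall k, (k <= D)%N -> moment c k = 0) -> moment c D.+1 <= 0 ->
  exists x s, [/\ path (sign_change c) x s, size s = D.+1 & c (last x s) < 0].
Proof.
move=> nz hm hD; apply: NNPP => noneg.
have few : sign_changes_le c D.+1.
  by move=> x s p; rewrite leqNgt; apply/negP => /(alt_path_neg_end p).
have [l [cl0 cr]] := last_neq0 nz.
have cl_gt0 : 0 < c l.
  rewrite lt_neqAle eq_sym cl0 leNgt /=; apply/negP => cl_lt0.
  have [x [s [p hs]]] := moments_alt_path nz hm.
  have cL0 : c (last x s) != 0 by rewrite alt_path_last_neq0 // -size_eq0 hs.
  have [cL_lt0|cL_ge0] := ltP (c (last x s)) 0; first by apply: noneg; exists x, s.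
  have Ll : c (last x s) * c l < 0.
    by rewrite pmulr_rlt0 // lt_neqAle eq_sym cL0.
  have := few x (rcons s l).
  rewrite rcons_path p /sign_change (opposite_lt_last cr Ll) Ll size_rcons hs.
  by rewrite ltnn => /(_ isT).
have [f Hf] := exists_sign_poly cl0 cr few.
have := sign_poly_sum_gt0 Hf; case: Hf => fs fl _ _.
rewrite (sum_horner_moment c fs) big_ord_recr big1 /= => [|k _]; last first.
  by rewrite hm ?mulr0 // -ltnS.
have : 0 <= f`_D.+1.
  move: fs; rewrite leq_eqVlt => /orP [/eqP sz | ?]; last by rewrite nth_default.
  by move: fl; rewrite lead_coefE sz pmulr_rgt0 // => /ltW.
by rewrite add0r; nra.
Qed.

Lemma count_neg_alt_path c x s : path (sign_change c) x s -> c (last x s) < 0 ->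
  count (fun i => c i < 0) (x :: s) = uphalf (size s).+1.
Proof.
suff : path (sign_change c) x s -> count (fun i => c i < 0) (x :: s) =
    if c (last x s) < 0 then uphalf (size s).+1 else (size s).+1./2.
  by move=> h p hl; rewrite h // hl.
elim/last_ind: s => [|p y IH] /=; first by case: (c x < 0).
rewrite rcons_path last_rcons => /andP [/IH /= {}IH /andP [_ hy]].
rewrite -cats1 count_cat addnA IH size_cat /= addn1 !addn0.
have [hL|hL] := ltP (c (last x p)) 0.
  have /negbTE -> : ~~ (c y < 0) by rewrite -leNgt; nra.
  by rewrite addn0.
have cy : c y < 0 by nra.
by rewrite cy addn1.
Qed.

Lemma moment_kernel D (r : seq 'I_n) : uniq r -> size r = D.+2 ->
  exists e : 'I_n -> R, [/\ exists i, e i != 0,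
    forall i, i \notin r -> e i = 0 & forall k, (k <= D)%N -> moment e k = 0].
Proof.
case: r => [//|x s] ur hr; set r := x :: s in ur hr *.
pose A : 'M[R]_(D.+2, D.+1) := \matrix_(a, k) t (nth x r a) ^+ k.
have /rowV0Pn [u /sub_kermxP uA u0] : kermx A != 0.
  by rewrite kermx_eq0 -row_leq_rank -ltnNge ltnS rank_leq_col.
pose e i := \sum_(a < D.+2 | nth x r a == i) u 0 a.
have eE (b : 'I_D.+2) : e (nth x r b) = u 0 b.
  rewrite /e (big_pred1 b) // => a /=.
  by rewrite nth_uniq ?hr ?ltn_ord.
exists e; split.
- have [b ub] : exists b, u 0 b != 0.
    apply: NNPP => h; case/eqP: u0; apply/rowP => b; rewrite mxE.
    by apply/eqP/negPn/negP => ub; apply: h; exists b.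
  by exists (nth x r b); rewrite eE.
- move=> i ri; rewrite /e big_pred0 // => a.
  by apply: contraNF ri => /eqP <-; rewrite mem_nth ?hr.
- move=> k hk; have := congr1 (fun M : 'M[R]_(1, D.+1) => M 0 (inord k)) uA.
  rewrite !mxE => <-.
  rewrite /moment [RHS](partition_big (fun a : 'I_D.+2 => nth x r a) xpredT) //=.
  apply: eq_bigr => i _; rewrite mulr_suml; apply: eq_bigr => a /eqP <-.
  by rewrite mxE inordK.
Qed.

Lemma alt_path_subset c (r : seq 'I_n) x s :
  path (sign_change c) x s -> s != [::] -> (forall i, i \notin r -> c i = 0) ->
  {subset x :: s <= r}.
Proof.
case: s => // y s p _ sup i hi; apply: contraTT (alt_path_neq0 p hi).
by move/sup ->; rewrite eqxx.
Qed.

Lemma moments_eq0_support D (S : {set 'I_n}) c : (#|S| <= D.+1)%N ->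
  (forall i, i \notin S -> c i = 0) -> (forall k, (k <= D)%N -> moment c k = 0) ->
  forall i, c i = 0.
Proof.
move=> hS sup hm i; apply: NNPP => /eqP ci.
have [x [s [p hs]]] := moments_alt_path (ex_intro _ i ci) hm.
have sub : {subset x :: s <= enum S}.
  apply: alt_path_subset p _ _ => [|j]; first by rewrite -size_eq0 hs.
  by rewrite mem_enum => /sup.
have := uniq_leq_size (alt_path_uniq p) sub.
by rewrite -cardE /= hs => /leq_trans /(_ hS); rewrite ltnn.
Qed.

Lemma alt_path_support_eq c (r : seq 'I_n) x s : sorted ltI r ->
  path (sign_change c) x s -> s != [::] -> (forall i, i \notin r -> c i = 0) ->
  (size r <= (size s).+1)%N -> x :: s = r.
Proof.
move=> sr p s0 sup hr; have sub := alt_path_subset p s0 sup.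
have [_ eqr] := uniq_min_size (alt_path_uniq p) sub hr.
exact: (irr_sorted_eq ltI_trans ltI_irr (alt_path_sorted p) sr eqr).
Qed.

Lemma alt_path_sign_agree c e x s : path (sign_change c) x s ->
  path (sign_change e) x s -> 0 < e (last x s) * c (last x s) ->
  {in x :: s, forall i, 0 < e i * c i}.
Proof.
elim: s x => [|y s IH] x /=; first by move=> _ _ h i; rewrite inE => /eqP ->.
move=> /andP [/andP [_ cxy] pc] /andP [/andP [_ exy] pe] hl.
have {}IH := IH y pc pe hl.
move=> i; rewrite inE => /orP [/eqP -> | /IH //].
by have := IH y (mem_head _ _); nra.
Qed.

Lemma alt_path_circuit D c x s : path (sign_change c) x s -> size s = D.+1 ->
  exists e, [/\ forall i, i \notin x :: s -> e i = 0,
    forall k, (k <= D)%N -> moment e k = 0 & {in x :: s, forall i, 0 < e i * c i}].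
Proof.
move=> pc hs; have s0 : s != [::] by rewrite -size_eq0 hs.
have [e0 [nz sup hm]] := moment_kernel (alt_path_uniq pc) (congr1 S hs).
have [y [s' [pe hs']]] := moments_alt_path nz hm.
have E : y :: s' = x :: s.
  apply: alt_path_support_eq (alt_path_sorted pc) pe _ sup _.
    by rewrite -size_eq0 hs'.
  by rewrite /= hs hs'.
case: E pe => -> -> pe.
have eL : e0 (last x s) * c (last x s) != 0.
  by rewrite mulf_neq0 // alt_path_last_neq0.
have [eL_gt0|eL_lt0] := ltP 0 (e0 (last x s) * c (last x s)).
  by exists e0; split => //; apply: alt_path_sign_agree.
exists (\- e0); split => [i /sup /= -> | k hk | ]; rewrite ?oppr0 ?momentN ?hm ?oppr0 //.
apply: alt_path_sign_agree => //; first by rewrite (eq_path (sign_change_opp e0)).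
by rewrite /= mulNr oppr_gt0 lt_neqAle eL.
Qed.

Lemma alt_path_circuit_moment_lt0 D c e x s :
  path (sign_change c) x s -> size s = D.+1 -> c (last x s) < 0 ->
  (forall i, i \notin x :: s -> e i = 0) -> (forall k, (k <= D)%N -> moment e k = 0) ->
  {in x :: s, forall i, 0 < e i * c i} -> moment e D.+1 < 0.
Proof.
move=> pc hs cL sup hm agree.
(* A positive top moment would give [\- e] a chain ending negatively, which can
   only be [x :: s] again; a zero one would kill [e], as then D+2 moments vanish
   on D+2 nodes. *)
have ex0 : e x != 0.
  by have := agree x (mem_head _ _); apply: contraTneq => ->; rewrite mul0r ltxx.
have [//|top_gt0|top_eq0] := ltgtP (moment e D.+1) 0.
  have [|||y [s' [pe hs' eL]]] := @moments_alt_path_neg D (\- e).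
  - by exists x; rewrite /= oppr_eq0.
  - by move=> k hk; rewrite momentN hm ?oppr0.
  - by rewrite momentN oppr_le0 ltW.
  have E : y :: s' = x :: s.
    apply: alt_path_support_eq (alt_path_sorted pc) pe _ _ _.
    - by rewrite -size_eq0 hs'.
    - by move=> i /sup /= ->; rewrite oppr0.
    - by rewrite /= hs hs'.
  case: E eL => -> -> /= eL.
  by have := agree (last x s) (mem_last _ _); nra.
case/eqP: ex0; apply: (@moments_eq0_support D.+1 [set i in x :: s]) => [|i|k].
- by rewrite cardsE (card_uniqP (alt_path_uniq pc)) /= hs.
- by rewrite inE => /sup.
- by rewrite leq_eqVlt => /orP [/eqP -> // | /hm].
Qed.

Lemma lower_circuit D c : (exists i, c i != 0) ->
  (forall k, (k <= D)%N -> moment c k = 0) -> moment c D.+1 <= 0 ->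
  exists e, [/\ forall i, 0 < e i -> 0 < c i, forall i, e i < 0 -> c i < 0,
    #|[set i | e i < 0]| = (uphalf D).+1,
    forall k, (k <= D)%N -> moment e k = 0 & moment e D.+1 < 0].
Proof.
move=> nz hm hD; have [x [s [pc hs cL]]] := moments_alt_path_neg nz hm hD.
have [e [sup he agree]] := alt_path_circuit pc hs.
have on_path i : e i != 0 -> i \in x :: s.
  by apply: contraNT => /sup ->; rewrite eqxx.
have same_sign i : e i != 0 -> (e i < 0) = (c i < 0).
  by move=> /on_path /agree eci; apply/idP/idP => ?; nra.
exists e; split => //.
- by move=> i ei; have := agree i (on_path i (lt0r_neq0 ei)); nra.
- by move=> i ei; rewrite -same_sign // ltr0_neq0.
- have -> : [set i | e i < 0] = [set i in filter (fun i => c i < 0) (x :: s)].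
    apply/setP => i; rewrite !in_set mem_filter.
    have [hi|/sup ->] := boolP (i \in x :: s); last by rewrite ltxx andbF.
    rewrite andbT same_sign //; move: (agree i hi).
    by apply: contraTneq => ->; rewrite mul0r ltxx.
  rewrite cardsE (card_uniqP _) ?filter_uniq ?(alt_path_uniq pc) //.
  by rewrite size_filter (count_neg_alt_path pc cL) hs.
- exact: alt_path_circuit_moment_lt0 pc hs cL sup he agree.
Qed.

End SignChanges.

Section Lifting.
Variables (R : realType) (n d : nat) (t : 'I_n -> R).
Hypothesis t_incr : forall i j : 'I_n, (i < j)%N -> t i < t j.

Local Notation moment := (moment t).

Lemma sum_pt_row (lam : 'I_n -> R) :
  \sum_i lam i *: pt d t i = \row_(k < d) moment lam k.+1.
Proof. by apply/rowP => k; rewrite summxE !mxE; apply: eq_bigr => i _; rewrite !mxE. Qed.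

Lemma convex_coef_moments (S S' : {set 'I_n}) lam mu :
  convex_coef S lam -> convex_coef S' mu ->
  \sum_i lam i *: pt d t i = \sum_i mu i *: pt d t i ->
  forall k, (k <= d)%N -> moment (lam \- mu) k = 0.
Proof.
move=> [_ [_ lam1]] [_ [_ mu1]] same [|k] hk; rewrite momentB ?moment0 ?lam1 ?mu1 ?subrr //.
have /rowP /(_ (Ordinal hk)) := same; rewrite !sum_pt_row !mxE => ->.
exact: subrr.
Qed.

Lemma convex_coef_sub (S S' : {set 'I_n}) (lam : 'I_n -> R) : S \subset S' ->
  convex_coef S lam -> convex_coef S' lam.
Proof.
move=> sub [ge0 [out sum1]]; split=> //; split=> // i.
by move/(contra (subsetP sub i))/out.
Qed.

Lemma convex_coef_unique (S : {set 'I_n}) lam mu : (#|S| <= d.+1)%N ->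
  convex_coef S lam -> convex_coef S mu ->
  \sum_i lam i *: pt d t i = \sum_i mu i *: pt d t i -> lam =1 mu.
Proof.
move=> hS cl cm same i; apply/eqP; rewrite -subr_eq0; apply/eqP.
apply: (moments_eq0_support t_incr hS _ (convex_coef_moments cl cm same)) => j hj /=.
by case: cl => _ [-> //]; case: cm => _ [-> //]; rewrite subrr.
Qed.

Definition normalize (w : 'I_n -> R) i := w i / \sum_j w j.

Lemma convex_coef_normalize (S : {set 'I_n}) (w : 'I_n -> R) :
  (forall i, 0 <= w i) -> (forall i, i \notin S -> w i = 0) -> 0 < \sum_i w i ->
  convex_coef S (normalize w).
Proof.
move=> ge0 out pos; split; [|split].
- by move=> i; rewrite divr_ge0 // ltW.
- by move=> i /out; rewrite /normalize => ->; rewrite mul0r.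
- by rewrite -mulr_suml divff // gt_eqF.
Qed.

Definition pos_part (e : 'I_n -> R) i := if 0 < e i then e i else 0.

Lemma pos_partB e i : pos_part e i - pos_part (\- e) i = e i.
Proof.
rewrite /pos_part /= oppr_gt0.
by case: (ltgtP (e i) 0) => [|_|->]; rewrite ?subr0 ?sub0r ?opprK ?subrr.
Qed.

Lemma pos_part_ge0 e i : 0 <= pos_part e i.
Proof. by rewrite /pos_part; case: ifP => // /ltW. Qed.

Lemma pos_part_gt0 e i : (0 < pos_part e i) = (0 < e i).
Proof. by rewrite /pos_part; case: ifP => // _; rewrite ltxx. Qed.

Lemma pos_part_out (S : {set 'I_n}) e i : (forall j, 0 < e j -> j \in S) ->
  i \notin S -> pos_part e i = 0.
Proof. by move=> h iS; rewrite /pos_part; case: ifP => // /h; rewrite (negbTE iS). Qed.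

Lemma circuit_split (e : 'I_n -> R) (S1 S2 : {set 'I_n}) :
  [set i | e i < 0] != set0 -> (forall k, (k <= d)%N -> moment e k = 0) ->
  (forall i, 0 < e i -> i \in S1) -> (forall i, e i < 0 -> i \in S2) ->
  exists lam mu, [/\ convex_coef S1 lam, convex_coef S2 mu,
    \sum_i lam i *: pt d t i = \sum_i mu i *: pt d t i,
    forall i, 0 < lam i -> 0 < e i &
    moment e d.+1 < 0 -> moment lam d.+1 < moment mu d.+1].
Proof.
case/set0Pn => i0; rewrite inE => ei0 hm h1 h2; set s := \sum_i pos_part (\- e) i.
have s_gt0 : 0 < s.
  by apply: (psumr_gt0 (i := i0)) => [j|]; rewrite ?pos_part_ge0 // pos_part_gt0 oppr_gt0.
have sum_pos : \sum_i pos_part e i = s.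
  apply/eqP; rewrite -subr_eq0 -sumrB.
  by under eq_bigr do rewrite pos_partB; rewrite -(moment0 t) hm.
have diff k : moment (normalize (pos_part e)) k - moment (normalize (pos_part (\- e))) k =
    moment e k / s.
  rewrite -momentB /moment mulr_suml; apply: eq_bigr => i _.
  by rewrite /normalize sum_pos /= -mulrBl pos_partB mulrAC.
exists (normalize (pos_part e)), (normalize (pos_part (\- e))); split.
- apply: convex_coef_normalize; rewrite ?sum_pos // => i; first exact: pos_part_ge0.
  exact: pos_part_out.
- apply: convex_coef_normalize => // i; first exact: pos_part_ge0.
  by apply: pos_part_out => j; rewrite /= oppr_gt0 => /h2.
- rewrite !sum_pt_row; apply/rowP => k; rewrite !mxE; apply/eqP.
  by rewrite -subr_eq0 diff hm ?mul0r.
- by move=> i; rewrite /normalize pmulr_lgt0 ?invr_gt0 ?sum_pos // pos_part_gt0.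
- by move=> top; rewrite -subr_lt0 diff pmulr_llt0 ?invr_gt0.
Qed.

Lemma convex_coef_gt0 (S : {set 'I_n}) (lam : 'I_n -> R) :
  convex_coef S lam -> exists i, 0 < lam i.
Proof.
move=> [ge0 [_ sum1]]; apply: NNPP => none; move: sum1; rewrite big1 => [/eqP|i _].
  by rewrite eq_sym oner_eq0.
by apply/eqP; rewrite eq_le ge0 andbT leNgt; apply/negP => ?; apply: none; exists i.
Qed.

Lemma convex_coef_lt_supp (S S' : {set 'I_n}) (lam mu : 'I_n -> R) i :
  convex_coef S lam -> convex_coef S' mu -> mu i < lam i -> i \in S.
Proof.
move=> [_ [lam_out _]] [mu_ge0 _]; apply: contraTT => /lam_out ->.
by rewrite -leNgt mu_ge0.
Qed.

Lemma hgt_sub (S S' : {set 'I_n}) (p : 'rV[R]_d) h :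
  S \subset S' -> hgt t S p h -> hgt t S' p h.
Proof. by move=> sub [lam [cl pl hl]]; exists lam; split=> //; apply: convex_coef_sub cl. Qed.

Lemma hle_on_subr (tau sigma rho : {set 'I_n}) : sigma \subset rho ->
  hle_on d t tau rho -> hle_on d t tau sigma.
Proof. by move=> sub hle p h1 h2 H1 /(hgt_sub sub); apply: hle. Qed.

Lemma face_le_tri T (rho sigma : {set 'I_n}) : triangulation d t T ->
  rho \in T -> sigma \subset rho -> le_tri d t sigma T.
Proof.
move=> [card_T _ no_overlap] hr sub rho' hr' p h1 h2 [nu [cnu pnu ->]] [nu' [cnu' pnu' ->]].
have {}cnu := convex_coef_sub sub cnu.
have [om [com pom]] : in_conv t (rho :&: rho') p.
  apply: NNPP => nin; apply: (no_overlap _ _ hr hr'); exists p; split => //.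
  - by exists nu.
  - by exists nu'.
have to_om (S : {set 'I_n}) lam : S \in T -> rho :&: rho' \subset S ->
    convex_coef S lam -> p = \sum_i lam i *: pt d t i -> lam =1 om.
  move=> hS sub' cl pl; apply: convex_coef_unique (eq_leq (card_T _ hS)) cl _ _.
    exact: convex_coef_sub sub' com.
  by rewrite -pl.
have E := to_om _ _ hr (subsetIl _ _) cnu pnu.
have E' := to_om _ _ hr' (subsetIr _ _) cnu' pnu'.
by rewrite [X in X <= _](eq_bigr (fun i => nu' i * t i ^+ d.+1)) // => i _; rewrite E E'.
Qed.

Lemma circuit_overlap (e : 'I_n -> R) (tau : {set 'I_n}) : (#|tau| <= d.+1)%N ->
  [set i | e i < 0] != set0 -> (forall k, (k <= d)%N -> moment e k = 0) ->
  (forall i, 0 < e i -> i \in tau) -> overlap d t tau [set i | e i < 0].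
Proof.
move=> htau neg hm pos.
have neg_in i : e i < 0 -> i \in [set i | e i < 0] by rewrite inE.
have [lam [mu [cl cm same lam_pos _]]] := circuit_split neg hm pos neg_in.
exists (\sum_i lam i *: pt d t i); split; [by exists lam | by exists mu | ].
move=> [om [com pom]].
have E := convex_coef_unique htau cl (convex_coef_sub (subsetIl _ _) com) pom.
have [j lam_j] := convex_coef_gt0 cl.
have : j \notin tau :&: [set i | e i < 0].
  by rewrite !inE negb_and -leNgt ltW ?orbT ?lam_pos.
by case: com => _ [om_out _] /om_out; rewrite -E => lam_j0; rewrite lam_j0 ltxx in lam_j.
Qed.

Lemma face_not_lt_lift T (tau sigma : {set 'I_n}) : is_face T tau ->
  le_tri d t sigma T -> ~ lt_lift d t tau sigma.
Proof.
move=> [rho hr sub] sle [[p [[al [cal pal]] [be [cbe pbe]] nint]] hle].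
have cmom := convex_coef_moments cal cbe (etrans (esym pal) pbe).
have c_ne0 : exists i, (al \- be) i != 0.
  apply: NNPP => all0; apply: nint; exists al; split => //.
  case: (cal) (cbe) => al_ge0 [al_out al1] [_ [be_out _]]; split=> //; split=> // i.
  rewrite inE negb_and => /orP [/al_out // | /be_out <-].
  by apply/eqP; rewrite -subr_eq0; apply/negPn/negP => ne; apply: all0; exists i.
have top : moment (al \- be) d.+1 <= 0.
  by rewrite momentB subr_le0; apply: (hle p); [exists al | exists be].
have [e [e_pos e_neg e_card emom etop]] := lower_circuit t_incr c_ne0 cmom top.
have [|||lam [mu [cl cm same _ /(_ etop) ltop]]] :=
  circuit_split (S1 := rho) (S2 := sigma) _ emom.
- by rewrite -card_gt0 e_card.
- move=> i /e_pos; rewrite subr_gt0 => /(convex_coef_lt_supp cal cbe).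
  exact: (subsetP sub).
- by move=> i /e_neg; rewrite subr_lt0 => /(convex_coef_lt_supp cbe cal).
have : moment mu d.+1 <= moment lam d.+1.
  by apply: (sle rho hr (\sum_i lam i *: pt d t i)); [exists mu | exists lam].
by rewrite leNgt ltop.
Qed.

Definition bary_coef (S : {set 'I_n}) := normalize (fun i => (i \in S)%:R).

Lemma bary_sum_gt0 (S : {set 'I_n}) i : i \in S -> 0 < \sum_j (j \in S)%:R :> R.
Proof. by move=> iS; apply: (psumr_gt0 (i := i)) => [j|]; rewrite ?ler0n // iS ltr01. Qed.

Lemma convex_coef_bary (S : {set 'I_n}) i : i \in S -> convex_coef S (bary_coef S).
Proof.
move=> /bary_sum_gt0 sum_gt0; have w_ge0 j : 0 <= (j \in S)%:R :> R by rewrite ler0n.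
by apply: convex_coef_normalize => // j /negbTE ->.
Qed.

Lemma bary_coef_gt0 (S : {set 'I_n}) i : i \in S -> 0 < bary_coef S i.
Proof. by move=> iS; rewrite divr_gt0 ?(bary_sum_gt0 iS) // iS ltr01. Qed.

Lemma not_face_lt_lift T (tau : {set 'I_n}) : (0 < n)%N -> triangulation d t T ->
  (#|tau| <= d.+1)%N -> le_tri d t tau T -> ~ is_face T tau ->
  exists sigma, in_sub d t T sigma /\ lt_lift d t tau sigma.
Proof.
move=> n_gt0 hT htau tau_le nface; have [_ cover _] := hT.
have hull (S : {set 'I_n}) i : i \in S -> exists2 rho, rho \in T &
    in_conv t rho (\sum_j bary_coef S j *: pt d t j).
  move=> /convex_coef_bary cb; apply: cover; exists (bary_coef S); split => //.
  exact: convex_coef_sub (subsetT S) cb.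
have [tau0|[i1 i1_tau]] := set_0Vmem tau.
  have [rho hr _] := hull [set: 'I_n] (Ordinal n_gt0) (in_setT _).
  by case: nface; exists rho; rewrite // tau0 sub0set.
have [rho hr [mu [cmu pmu]]] := hull tau i1 i1_tau.
have [i0 i0_tau i0_rho] : exists2 i0, i0 \in tau & i0 \notin rho.
  by apply/subsetPn/negP => sub; apply: nface; exists rho.
have cb := convex_coef_bary i0_tau.
have [|||e [e_pos e_neg e_card emom _]] :=
  @lower_circuit _ _ t t_incr d (bary_coef tau \- mu).
- by exists i0; case: cmu => _ [/= -> // _]; rewrite subr0 gt_eqF ?bary_coef_gt0.
- exact: convex_coef_moments cb cmu pmu.
- rewrite momentB subr_le0; apply: (tau_le rho hr (\sum_j bary_coef tau j *: pt d t j)).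
    by exists (bary_coef tau).
  by exists mu.
set sigma := [set i | e i < 0].
have sub : sigma \subset rho.
  apply/subsetP => i; rewrite inE => /e_neg; rewrite subr_lt0.
  exact: convex_coef_lt_supp cmu cb.
exists sigma; split; first by split=> //; apply: face_le_tri hT hr sub.
split; last exact: hle_on_subr sub (tau_le rho hr).
apply: circuit_overlap; rewrite -?card_gt0 ?e_card // => i /e_pos.
by rewrite subr_gt0; apply: convex_coef_lt_supp cb cmu.
Qed.

End Lifting.

Theorem lemma2p13 (R : realType) (n d : nat) (t : 'I_n -> R)
    (t_incr : forall i j : 'I_n, (i < j)%N -> t i < t j)
    (d_lt_n : (d < n)%N)
    (T : {set {set 'I_n}}) (hT : triangulation d t T)
    (tau : {set 'I_n}) (tau_simplex : (#|tau| <= d.+1)%N)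
    (tau_le : le_tri d t tau T) :
  is_face T tau <-> ~ (exists sigma, in_sub d t T sigma /\ lt_lift d t tau sigma).
Proof.
split.
  by move=> face [sigma [[sigma_le _] lt]]; apply: (face_not_lt_lift t_incr face sigma_le).
move=> no_sub; apply: NNPP => nface; apply: no_sub.
exact: (not_face_lt_lift t_incr (leq_ltn_trans (leq0n d) d_lt_n) hT tau_simplex tau_le nface).
Qed.
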